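(* Let $S$ be a nonabelian finite simple group, $I$ a set, and $G=S^I$ (the Cartesian product). Then every finite quotient of $G$ by an abstract normal subgroup of finite index is semisimple, i.e. is a direct product of finitely many nonabelian finite simple groups. *)

From mathcomp Require Import all_boot all_order all_algebra all_fingroup all_solvable.
Set Implicit Arguments. Unset Strict Implicit. Unset Printing Implicit Defensive.
Import GroupScope.

(* The (unrestricted) Cartesian power S^I of the finite group S = [set: gT],
   represented by the type I -> gT with pointwise multiplication.  I is an
   arbitrary (possibly infinite) type, so S^I is an abstract group, not a
   finGroupType. *)
Definition cart_mul (I : Type) (gT : finGroupType) (x y : I -> gT) : I -> gT :=
  fun i => x i * y i.

Definition cart_hom (I : Type) (gT H : finGroupType) (f : (I -> gT) -> H) : Prop :=
  forall x y : I -> gT, f (cart_mul x y) = f x * f y.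

Definition semisimple_fg (H : finGroupType) (G : {set H}) : Prop :=
  exists n : nat, exists A : 'I_n -> {group H},
    (forall i, simple (A i) /\ ~~ abelian (A i)) /\
    \big[dprod/1]_(i < n) (A i : {set H}) = G.

(* Let g : S^I -> H be a homomorphism onto a finite group.  For A ⊆ I, the
   restrictions of g to elements supported on A and on its complement have
   commuting images whose product is im g.  As S is perfect with a bounded
   commutator width, a homomorphism from S^I with abelian image is trivial;
   hence if both restrictions are nontrivial, both images are proper and we
   conclude by induction on |im g|, a product of commuting semisimple subgroups
   being semisimple.  Otherwise g is determined by its values on the constant
   functions (split I into the finitely many fibres of x), so im g is a
   nontrivial quotient of the simple group S, i.e. isomorphic to S. *)

From mathcomp Require Import all_boot all_order all_algebra all_fingroup all_solvable.
From mathcomp Require Import boolp.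
Set Implicit Arguments. Unset Strict Implicit. Unset Printing Implicit Defensive.
Import GroupScope.

Section CartesianPower.
Variables (I : Type) (gT : finGroupType).
Implicit Types (x y z : I -> gT) (A B : I -> bool).

Definition cart_one : I -> gT := fun _ => 1.
Definition cart_inv x : I -> gT := fun i => (x i)^-1.
Definition restr A x : I -> gT := fun i => if A i then x i else 1.
Definition compl A : I -> bool := fun i => ~~ A i.

Lemma complK A : compl (compl A) = A.
Proof. by apply: funext => i; rewrite /compl negbK. Qed.

Lemma restr_split A x : x = cart_mul (restr A x) (restr (compl A) x).
Proof.
by apply: funext => i; rewrite /cart_mul /restr /compl; case: (A i); rewrite ?mulg1 ?mul1g.
Qed.

Variable H : finGroupType.
Implicit Type g : (I -> gT) -> H.

Definition cart_im g : {set H} := [set h | `[< exists x, g x = h >]].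

Lemma cart_imP g h : reflect (exists x, g x = h) (h \in cart_im g).
Proof. by rewrite inE; apply: asboolP. Qed.

Lemma mem_cart_im g x : g x \in cart_im g.
Proof. by apply/cart_imP; exists x. Qed.

Lemma cart_im_restr_sub g A : cart_im (fun x => g (restr A x)) \subset cart_im g.
Proof. by apply/subsetP => _ /cart_imP [x <-]; apply: mem_cart_im. Qed.

Definition null g A : Prop := forall x, g (restr A x) = 1.

Section Hom.
Variables (g : (I -> gT) -> H) (Hg : cart_hom g).

Lemma cart_hom1 : g cart_one = 1.
Proof.
have := Hg cart_one cart_one.
have -> : cart_mul cart_one cart_one = cart_one by apply: funext => i; apply: mulg1.
by move/(congr1 (mulg (g cart_one)^-1)); rewrite mulKg mulVg => <-.
Qed.

Lemma cart_homV x : g (cart_inv x) = (g x)^-1.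
Proof.
apply: (mulIg (g x)); rewrite mulVg -Hg -cart_hom1; congr g.
by apply: funext => i; apply: mulVg.
Qed.

Lemma cart_hom_commg y z : g (fun i => [~ y i, z i]) = [~ g y, g z].
Proof.
have -> : (fun i => [~ y i, z i]) =
          cart_mul (cart_inv y) (cart_mul (cart_inv z) (cart_mul y z)).
  by apply: funext => i; rewrite /cart_mul /cart_inv commgEl conjgE !mulgA.
by rewrite !Hg !cart_homV commgEl conjgE !mulgA.
Qed.

Lemma cart_hom_prod n (F : I -> 'I_n -> gT) :
  g (fun i => \prod_(k < n) F i k) = \prod_(k < n) g (fun i => F i k).
Proof.
elim: n F => [|n IHn] F.
  rewrite big_ord0 -cart_hom1; congr g; apply: funext => i; exact: big_ord0.
rewrite big_ord_recr /= -(IHn (fun i k => F i (widen_ord _ k))) -Hg; congr g.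
by apply: funext => i; rewrite big_ord_recr.
Qed.

Lemma cart_im_group : group_set (cart_im g).
Proof.
apply/group_setP; split; first by rewrite -cart_hom1 mem_cart_im.
by move=> _ _ /cart_imP [x <-] /cart_imP [y <-]; rewrite -Hg mem_cart_im.
Qed.

Lemma cart_hom_restr A : cart_hom (fun x => g (restr A x)).
Proof.
move=> y z; rewrite -Hg; congr g; apply: funext => i.
by rewrite /restr /cart_mul; case: (A i); rewrite ?mulg1.
Qed.

Lemma commute_restr_compl A y z : commute (g (restr A y)) (g (restr (compl A) z)).
Proof.
rewrite /commute -!Hg; congr g; apply: funext => i.
by rewrite /restr /cart_mul /compl; case: (A i); rewrite ?mulg1 ?mul1g.
Qed.

Lemma cart_im_restr_mul A :
  cart_im g = cart_im (fun x => g (restr A x)) * cart_im (fun x => g (restr (compl A) x)).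
Proof.
apply/eqP; rewrite eqEsubset; apply/andP; split; apply/subsetP.
  by move=> _ /cart_imP [x <-]; rewrite (restr_split A x) Hg mem_mulg ?mem_cart_im.
by move=> _ /mulsgP [_ _ /cart_imP [y <-] /cart_imP [z <-] ->]; rewrite -Hg mem_cart_im.
Qed.

Lemma cart_im_restr_cent A :
  cart_im (fun x => g (restr (compl A) x)) \subset 'C(cart_im (fun x => g (restr A x))).
Proof.
apply/centsP => _ /cart_imP [z <-] _ /cart_imP [y <-].
exact: esym (commute_restr_compl A y z).
Qed.

Lemma null_compl_restr A x : null g (compl A) -> g x = g (restr A x).
Proof. by move=> nA; rewrite {1}(restr_split A x) Hg nA mulg1. Qed.

Lemma null_or A B : null g A -> null g B -> null g (fun i => A i || B i).
Proof.
move=> nA nB x.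
have -> : restr (fun i => A i || B i) x = cart_mul (restr A x) (restr B (restr (compl A) x)).
  apply: funext => i; rewrite /restr /cart_mul /compl.
  by case: (A i); case: (B i); rewrite /= ?mulg1 ?mul1g.
by rewrite Hg nA nB mulg1.
Qed.

Lemma null_fibers x (L : seq gT) :
  (forall s, null g (fun i => x i == s)) -> null g (fun i => x i \in L).
Proof.
move=> nfib; elim: L => [|s L IHL] y.
  rewrite -cart_hom1; congr g; apply: funext => i; by rewrite /restr in_nil.
have -> : (fun i => x i \in s :: L) = (fun i => (x i == s) || (x i \in L)).
  by apply: funext => i; rewrite in_cons.
exact: null_or.
Qed.

Lemma cart_hom_trivial_of_null_fibers x :
  (forall s, null g (fun i => x i == s)) -> forall y, g y = 1.
Proof.
move=> /(null_fibers (enum gT)) nall y; rewrite -(nall y); congr g.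
by apply: funext => i; rewrite /restr mem_enum.
Qed.

End Hom.
End CartesianPower.

Section Perfect.
Variable gT : finGroupType.

Lemma simple_nonabelian_perfect (G : {group gT}) :
  simple G -> ~~ abelian G -> [~: G, G] = G.
Proof.
case/simpleP=> [_ simG] nabG; have [e|e] := simG _ (der_normal 1 G).
  by move: nabG; rewrite (sameP derG1P eqP) -(inj_eq val_inj) /= e eqxx.
by rewrite -derg1 e.
Qed.

Lemma commutator_product (G : {group gT}) s : [~: G, G] = G ->
  exists u : nat * (nat -> gT * gT),
    s \in G -> s = \prod_(k < u.1) [~ (u.2 k).1, (u.2 k).2].
Proof.
move=> perfG; have [sG|] := boolP (s \in G); last by exists (0, fun _ => (1, 1)).
move: sG; rewrite -perfG => /gen_prodgP [n [c Hc ->]].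
have pair k : exists p : gT * gT, c k = [~ p.1, p.2].
  by case/imset2P: (Hc k) => a b _ _ ->; exists (a, b).
have [p Hp] := fin_all_exists pair.
exists (n, fun k => if insub k is Some k' then p k' else (1, 1)) => _ /=.
by apply: eq_bigr => k _; rewrite valK Hp.
Qed.

(* The bound [N] on the commutator length, uniform over the finite group [G],
   is what lets the argument act coordinatewise on an infinite power. *)
Lemma perfect_commutator_width (G : {group gT}) : [~: G, G] = G ->
  exists N (c : gT -> nat -> gT * gT),
    forall s, s \in G -> s = \prod_(k < N) [~ (c s k).1, (c s k).2].
Proof.
move=> perfG; have [u Hu] := fin_all_exists (fun s => commutator_product s perfG).
exists (\max_s (u s).1), (fun s k => if k < (u s).1 then (u s).2 k else (1, 1)).
move=> s sG; rewrite {1}(Hu s sG) (big_ord_widen _ (fun k => [~ ((u s).2 k).1, ((u s).2 k).2])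
  (@leq_bigmax _ (fun s => (u s).1) s)).
by rewrite big_mkcond; apply: eq_bigr => k _; case: ifP => //= _; rewrite comm1g.
Qed.

Lemma cart_hom_abelian_trivial (I : Type) (H : finGroupType) (g : (I -> gT) -> H) :
  [~: [set: gT], [set: gT]] = [set: gT] -> cart_hom g -> abelian (cart_im g) ->
  forall x, g x = 1.
Proof.
move=> perfT Hg abg x; have [N [c Hc]] := perfect_commutator_width perfT.
have -> : x = fun i => \prod_(k < N) [~ (c (x i) k).1, (c (x i) k).2].
  by apply: funext => i; rewrite -Hc ?inE.
rewrite cart_hom_prod //; apply: big1 => k _; rewrite cart_hom_commg //.
by apply/eqP/commgP; apply: (centsP abg); apply: mem_cart_im.
Qed.

End Perfect.

Section Semisimple.
Variable H : finGroupType.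
Implicit Types K L B : {group H}.

Lemma semisimple1 : semisimple_fg (1 : {set H}).
Proof. by exists 0, (fun _ => 1%G); split; [case | rewrite big_ord0]. Qed.

Lemma semisimple_simple (G : {group H}) : simple G -> ~~ abelian G -> semisimple_fg G.
Proof. by move=> sG nG; exists 1%N, (fun _ => G); split=> //; rewrite big_ord1. Qed.

Lemma semisimple_dprod K B (G : {set H}) :
  semisimple_fg K -> simple B -> ~~ abelian B -> K \x B = G -> semisimple_fg G.
Proof.
case=> n [A [sA defK]] sB nB defG.
pose A' (i : 'I_n.+1) := if unlift ord_max i is Some j then A j else B.
exists n.+1, A'; split=> [i|]; first by rewrite /A'; case: unlift.
rewrite big_ord_recr /= /A' unlift_none -defG -defK; congr (_ \x _).
apply: eq_bigr => i _.
have -> : widen_ord (leqnSn n) i = lift ord_max i by apply: val_inj; exact: esym (lift_max i).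
by rewrite liftK.
Qed.

Lemma semisimple_mul_simple K B :
  semisimple_fg K -> simple B -> ~~ abelian B -> B \subset 'C(K) ->
  semisimple_fg (K * B).
Proof.
move=> sK sB nB cKB; have [_ simB] := simpleP _ sB.
have nKB_B : (K :&: B)%G <| B.
  by rewrite /normal subsetIr normsI ?normG // (subset_trans cKB) ?cent_sub.
have [KB1|KB_B] := simB _ nKB_B.
  by apply: (semisimple_dprod sK sB nB); rewrite dprodE.
have sBK : B \subset K by rewrite -KB_B subsetIl.
by rewrite mulGSid.
Qed.

Lemma semisimple_mul K L :
  semisimple_fg K -> semisimple_fg L -> L \subset 'C(K) -> semisimple_fg (K * L).
Proof.
move=> sK [n [B [sB]]]; elim: n B L sB => [|n IHn] B L sB.
  by rewrite big_ord0 => <- _; rewrite mulg1.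
rewrite big_ord_recr /= => /dprodP [[L' Bn defL' defBn] defL cL'Bn _] cKL.
rewrite defL' defBn in defL cL'Bn.
have sL'L : L' \subset L by rewrite -defL mulG_subl.
have sBnL : Bn \subset L by rewrite -defL mulG_subr.
have cKL' : L' \subset 'C(K) := subset_trans sL'L cKL.
have sKL' := IHn (fun j => B (widen_ord (leqnSn n) j)) L' (fun j => sB _) defL' cKL'.
have [simBn nabBn] := sB ord_max; rewrite defBn in simBn nabBn.
rewrite -defL mulgA -(cent_joinEr cKL').
apply: semisimple_mul_simple => //; first by rewrite /= cent_joinEr.
by rewrite centY subsetI cL'Bn (subset_trans sBnL cKL).
Qed.

End Semisimple.

Section Indecomposable.
Variables (I : Type) (gT H : finGroupType) (g : (I -> gT) -> H).
Hypotheses (simT : simple [set: gT]) (Hg : cart_hom g).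
Hypothesis g_indecomposable : forall A, null g A \/ null g (compl A).
Hypothesis g_nontrivial : exists y, g y != 1.

(* Some fiber of [x] has a null complement, for otherwise every fiber is null. *)
Lemma cart_hom_indecomposable_const x : exists s : gT, g x = g (fun _ => s).
Proof.
have [s nfib] : exists s, null g (compl (fun i => x i == s)).
  apply/not_existsP => nfibs; have [y /eqP[]] := g_nontrivial.
  apply: (cart_hom_trivial_of_null_fibers (x := x) Hg) => s.
  by have [|/nfibs] := g_indecomposable (fun i => x i == s).
exists s; rewrite (null_compl_restr Hg x nfib) (null_compl_restr Hg (fun _ => s) nfib).
by congr g; apply: funext => i; rewrite /restr; case: eqP.
Qed.

Lemma cart_im_indecomposable : [set: gT] \isog cart_im g.
Proof.
pose phi s : H := g (fun _ => s).
have phiM : {in [set: gT] &, {morph phi : a b / a * b}} by move=> a b _ _; rewrite /phi -Hg.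
pose m := Morphism phiM.
have im_m : m @* [set: gT] = cart_im g.
  apply/eqP; rewrite eqEsubset; apply/andP; split.
    by apply/subsetP => _ /morphimP [s _ _ ->]; apply: mem_cart_im.
  apply/subsetP => _ /cart_imP [x <-]; have [s ->] := cart_hom_indecomposable_const x.
  by apply: (mem_morphim m); rewrite inE.
have inj_m : 'injm m.
  have [_ simT'] := simpleP _ simT; have [-> //|kerT] := simT' _ (ker_normal m).
  have [y /eqP[]] := g_nontrivial; have [s ->] := cart_hom_indecomposable_const y.
  have sker : s \in 'ker m by rewrite kerT inE.
  exact: mker sker.
by rewrite -im_m sub_isog.
Qed.

End Indecomposable.

Section Main.
Variables (I : Type) (gT H : finGroupType).
Hypotheses (simT : simple [set: gT]) (nabT : ~~ abelian [set: gT]).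
Implicit Type g : (I -> gT) -> H.

Let perfT : [~: [set: gT], [set: gT]] = [set: gT].
Proof. exact: (simple_nonabelian_perfect (G := [set: gT]%G)). Qed.

(* If the image of [g] restricted to [A] were everything, the commuting image
   of [g] restricted to [compl A] would be central, hence abelian, hence trivial. *)
Lemma cart_im_restr_proper g A : cart_hom g -> ~ null g (compl A) ->
  cart_im (fun x => g (restr A x)) \proper cart_im g.
Proof.
move=> Hg nnull; rewrite properEneq cart_im_restr_sub andbT; apply/eqP => imA.
apply: nnull; apply: (cart_hom_abelian_trivial perfT (cart_hom_restr Hg (compl A))).
by rewrite /abelian (subset_trans (cart_im_restr_cent Hg A)) // centS // imA cart_im_restr_sub.
Qed.

Lemma semisimple_cart_im g : cart_hom g -> semisimple_fg (cart_im g).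
Proof.
have [n] := ubnP #|cart_im g|; elim: n g => // n IHn g ltGn Hg.
have IHrestr A : ~ null g (compl A) -> semisimple_fg (cart_im (fun x => g (restr A x))).
  move=> ncA; apply: IHn (cart_hom_restr Hg A).
  exact: leq_trans (proper_card (cart_im_restr_proper Hg ncA)) (ltnSE ltGn).
have [[A [nA ncA]]|indec] := pselect (exists A, ~ null g A /\ ~ null g (compl A)).
  have HgA := cart_hom_restr Hg A; have HgAc := cart_hom_restr Hg (compl A).
  rewrite (cart_im_restr_mul Hg A).
  apply: (semisimple_mul (K := Group (cart_im_group HgA)) (L := Group (cart_im_group HgAc))).
  - exact: IHrestr.
  - by apply: IHrestr; rewrite complK.
  - exact: cart_im_restr_cent.
have {}indec A : null g A \/ null g (compl A).
  by apply: contrapT => /not_orP [nA ncA]; apply: indec; exists A.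
pose G := Group (cart_im_group Hg); rewrite -[cart_im g]/(gval G).
have [[y nty]|triv] := pselect (exists y, g y != 1).
  have isoT : [set: gT]%G \isog G := cart_im_indecomposable simT Hg indec (ex_intro _ y nty).
  by apply: semisimple_simple; [rewrite -(isog_simple isoT) | rewrite -(isog_abelian isoT)].
suff -> : gval G = 1 by apply: semisimple1.
apply/trivgP/subsetP => _ /cart_imP [x <-]; rewrite inE.
by apply: contra_notT triv => ntx; exists x.
Qed.

End Main.

Theorem mainTheorem9 (gT : finGroupType) (I : Type)
  (HS : simple [set: gT]) (HnA : ~~ abelian [set: gT])
  (H : finGroupType) (f : (I -> gT) -> H)
  (Hf : cart_hom f) (Hsurj : forall h : H, exists x : I -> gT, f x = h) :
  semisimple_fg [set: H].
Proof.
have -> : [set: H] = cart_im f by apply/setP => h; rewrite inE; apply/esym/cart_imP.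
exact: semisimple_cart_im.
Qed.
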